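(* Let $M$ be a partial $H$-module with partial action $h\otimes m\mapsto h\cdot m$, and let $N$ be a left $H$-module with action $h\otimes n\mapsto hn$. Then $M\otimes N$ is a partial $H$-module via $$h\cdot(m\otimes n)=h_{(1)}\cdot m\otimes h_{(2)}n.$$
   Context: Throughout, $k$ is a field and $H$ is a Hopf algebra over $k$ with bijective antipode $S$ and Sweedler notation $\Delta(h)=h_{(1)}\otimes h_{(2)}$. A partial $H$-module is a vector space $M$ with a linear map $\pi:H\to\mathrm{End}_k(M)$, written $h\cdot m=\pi(h)(m)$, satisfying, for all $h,k\in H$: - $\pi(1_H)=\mathrm{id}$; - $\pi(h)\pi(k_{(1)})\pi(S(k_{(2)}))=\pi(hk_{(1)})\pi(S(k_{(2)}))$; - $\pi(h_{(1)})\pi(S(h_{(2)}))\pi(k)=\pi(h_{(1)})\pi(S(h_{(2)})k)$; - $\pi(h)\pi(S(k_{(1)}))\pi(k_{(2)})=\pi(hS(k_{(1)}))\pi(k_{(2)})$; - $\pi(S(h_{(1)}))\pi(h_{(2)})\pi(k)=\pi(S(h_{(1)}))\pi(h_{(2)}k)$. *)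

(* Tensor products are given by their universal
   property; Sweedler sums are the values of the induced linear maps. *)
From HB Require Import structures.
From mathcomp Require Import all_boot all_algebra.
From Stdlib Require Import ClassicalEpsilon.

Set Implicit Arguments.
Unset Strict Implicit.
Unset Printing Implicit Defensive.
Import GRing.Theory.
Local Open Scope ring_scope.

Definition is_linear (k : fieldType) (U W : lmodType k) (f : U -> W) : Prop :=
  forall (a : k) (x y : U), f (a *: x + y) = a *: f x + f y.

Definition is_bilinear (k : fieldType) (U V W : lmodType k) (f : U -> V -> W) : Prop :=
  (forall v : V, is_linear (fun u => f u v)) /\ (forall u : U, is_linear (f u)).

Record tensor (k : fieldType) (U V : lmodType k) := Tensor {
  tspace : lmodType k;
  tens : U -> V -> tspace;
  tens_bilinear : is_bilinear tens;
  tens_universal : forall (W : lmodType k) (f : U -> V -> W), is_bilinear f ->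
    exists g : tspace -> W, [/\ is_linear g,
      (forall u v, g (tens u v) = f u v) &
      (forall g' : tspace -> W, is_linear g' ->
         (forall u v, g' (tens u v) = f u v) -> forall x, g' x = g x)]
}.

(* tlift T f x : the value at x of the (unique) linear map T -> W that sends
   u (x) v to f u v (for f bilinear).  For x = Delta(h) this is the Sweedler sum
   f(h_(1), h_(2)). *)
Definition tlift (k : fieldType) (U V : lmodType k) (T : tensor U V)
  (W : lmodType k) (f : U -> V -> W) (x : tspace T) : W :=
  epsilon (inhabits 0) (fun w => exists g : tspace T -> W,
    [/\ is_linear g, (forall u v, g (tens T u v) = f u v) & g x = w]).

Arguments tlift {k U V} T {W} f x.

(* HHH is a tensor product (H (x) H) (x) H, used to state coassociativity. *)
Definition is_hopf (k : fieldType) (H : algType k) (HH : tensor H H)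
  (HHH : tensor (tspace HH) H) (Delta : H -> tspace HH) (eps : H -> k)
  (S : H -> H) : Prop :=
  
  (is_linear Delta) /\
  ((forall (a : k) (x y : H), eps (a *: x + y) = a * eps x + eps y)) /\
  (is_linear S) /\
  (
      Delta 1 = tens HH 1 1 /\
      (forall x y : H, Delta (x * y) =
         tlift HH (fun a b => tlift HH (fun c d => tens HH (a * c) (b * d)) (Delta y))
               (Delta x))) /\
  (eps 1 = 1 /\ (forall x y : H, eps (x * y) = eps x * eps y)) /\
  ((* coassociativity: h_(1)(1) (x) h_(1)(2) (x) h_(2) = h_(1) (x) h_(2)(1) (x) h_(2)(2) *)
      (forall h : H,
         tlift HH (fun a b => tens HHH (Delta a) b) (Delta h) =
         tlift HH (fun a b => tlift HH (fun c d => tens HHH (tens HH a c) d) (Delta b))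
               (Delta h))) /\
  (
      (forall h : H, tlift HH (fun a b => eps a *: b) (Delta h) = h /\
                     tlift HH (fun a b => eps b *: a) (Delta h) = h)) /\
  (
      (forall h : H, tlift HH (fun a b => S a * b) (Delta h) = eps h *: 1 /\
                     tlift HH (fun a b => a * S b) (Delta h) = eps h *: 1)) /\
  (bijective S).

(* Partial H-module: pi : H -> End_k(M) linear, with the five axioms
   (equalities of endomorphisms checked pointwise on m). *)
Definition is_partial_module (k : fieldType) (H : algType k) (HH : tensor H H)
  (Delta : H -> tspace HH) (S : H -> H) (M : lmodType k) (pi : H -> M -> M) : Prop :=
  
  (is_bilinear (fun (h : H) (m : M) => pi h m)) /\
  ((forall m : M, pi 1 m = m)) /\
  ((forall (h g : H) (m : M),
         tlift HH (fun a b => pi h (pi a (pi (S b) m))) (Delta g) =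
         tlift HH (fun a b => pi (h * a) (pi (S b) m)) (Delta g))) /\
  ((forall (h g : H) (m : M),
         tlift HH (fun a b => pi a (pi (S b) (pi g m))) (Delta h) =
         tlift HH (fun a b => pi a (pi (S b * g) m)) (Delta h))) /\
  ((forall (h g : H) (m : M),
         tlift HH (fun a b => pi h (pi (S a) (pi b m))) (Delta g) =
         tlift HH (fun a b => pi (h * S a) (pi b m)) (Delta g))) /\
  ((forall (h g : H) (m : M),
         tlift HH (fun a b => pi (S a) (pi b (pi g m))) (Delta h) =
         tlift HH (fun a b => pi (S a) (pi (b * g) m)) (Delta h))).

Definition is_module (k : fieldType) (H : algType k) (N : lmodType k)
  (rho : H -> N -> N) : Prop :=
  [/\ is_bilinear (fun (h : H) (n : N) => rho h n),
      (forall n : N, rho 1 n = n) &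
      (forall (x y : H) (n : N), rho (x * y) n = rho x (rho y n))].

(* Three successive
   actions send m ⊗ n to A(x_(1), y_(1), z_(1)) ⊗ x_(2) y_(2) z_(2) n, where A is
   the corresponding composite of partial actions on M.  Expanding antipodes with
   Δ(S x) = S x_(2) ⊗ S x_(1) and regrouping by coassociativity, the
   N-component of the first two axioms contains a factor x_(1) S x_(2) = ε(x) 1 and
   disappears, while in the last two axioms it is the same on both sides; what
   remains is in each case the corresponding axiom for M. *)

From HB Require Import structures.
From mathcomp Require Import all_boot all_algebra.
From Stdlib Require Import ClassicalEpsilon FunctionalExtensionality.
Import GRing.Theory.
Local Open Scope ring_scope.
Set Implicit Arguments.
Unset Strict Implicit.
Unset Printing Implicit Defensive.

Create HintDb linear.

Section Linear.
Variable k : fieldType.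
Implicit Types U V W X : lmodType k.

Lemma is_linear_id U : is_linear (fun x : U => x).
Proof. by []. Qed.

Lemma is_linear_comp U V W (f : V -> W) (g : U -> V) :
  is_linear f -> is_linear g -> is_linear (fun x => f (g x)).
Proof. by move=> lf lg a x y; rewrite lg lf. Qed.

Lemma is_linear_comb U W (f g : U -> W) (c : k) :
  is_linear f -> is_linear g -> is_linear (fun x => c *: f x + g x).
Proof. by move=> lf lg a x y; rewrite lf lg !scalerDr !scalerA mulrC addrACA. Qed.

Lemma is_linear0 U W (f : U -> W) : is_linear f -> f 0 = 0.
Proof.
move=> lf; have := lf 1 0 0; rewrite !scale1r addr0 => /(congr1 (fun z => z - f 0)).
by rewrite addrK subrr.
Qed.

Lemma is_linearZ U W (f : U -> W) a x : is_linear f -> f (a *: x) = a *: f x.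
Proof. by move=> lf; rewrite -[a *: x]addr0 lf (is_linear0 lf) addr0. Qed.

Lemma is_linear_scalel U W (a : U -> k^o) (c : W) :
  is_linear a -> is_linear (fun x => a x *: c).
Proof. by move=> la b x y; rewrite la scalerDl scalerA. Qed.

Lemma is_linear_scaler U (c : k) : is_linear (fun x : U => c *: x).
Proof. by move=> a x y; rewrite scalerDr !scalerA mulrC. Qed.

Lemma is_linear_mull (A : algType k) (c : A) : is_linear ( *%R c).
Proof. by move=> a x y; rewrite mulrDr scalerAr. Qed.

Lemma is_linear_mulr (A : lalgType k) (c : A) : is_linear (fun x : A => x * c).
Proof. by move=> a x y; rewrite mulrDl scalerAl. Qed.

Lemma is_bilinear_l U V W (f : U -> V -> W) v : is_bilinear f -> is_linear (fun u => f u v).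
Proof. by case=> lf _; apply: lf. Qed.

Lemma is_bilinear_r U V W (f : U -> V -> W) u : is_bilinear f -> is_linear (f u).
Proof. by case=> _ lf; apply: lf. Qed.

End Linear.

#[export] Hint Resolve is_linear_scaler : linear.
#[export] Hint Extern 1 (is_linear ( *%R _)) => apply: is_linear_mull : linear.
#[export] Hint Extern 1 (is_linear (fun x => x * _)) => apply: is_linear_mulr : linear.

Section Tensor.
Variables (k : fieldType) (U V : lmodType k) (T : tensor U V).
Implicit Types W X : lmodType k.

Lemma tlift_spec W (f : U -> V -> W) : is_bilinear f ->
  [/\ is_linear (tlift T f), (forall u v, tlift T f (tens T u v) = f u v) &
   (forall g, is_linear g -> (forall u v, g (tens T u v) = f u v) ->
     forall x, tlift T f x = g x)].
Proof.
move=> bf; have [g [lg gE g_uniq]] := tens_universal T bf.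
have tliftg x : tlift T f x = g x.
  have ex : exists w g0, [/\ is_linear g0, (forall u v, g0 (tens T u v) = f u v) & g0 x = w].
    by exists (g x), g.
  rewrite /tlift; have [g0 [lg0 g0E <-]] := epsilon_spec (inhabits 0) _ ex.
  exact: g_uniq.
split=> [a x y|u v|g' lg' g'E x]; rewrite !tliftg; [exact: lg | exact: gE | ].
by rewrite (g_uniq g').
Qed.

Lemma tliftE W (f : U -> V -> W) u v : is_bilinear f -> tlift T f (tens T u v) = f u v.
Proof. by case/tlift_spec=> _ ->. Qed.

Lemma is_linear_tlift W (f : U -> V -> W) : is_bilinear f -> is_linear (tlift T f).
Proof. by case/tlift_spec. Qed.

Lemma tlift_unique W (f : U -> V -> W) g : is_bilinear f -> is_linear g ->
  (forall u v, g (tens T u v) = f u v) -> forall x, tlift T f x = g x.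
Proof. by case/tlift_spec=> _ _; apply. Qed.

Lemma eq_tlift W (f g : U -> V -> W) x : (forall u v, f u v = g u v) ->
  tlift T f x = tlift T g x.
Proof.
by move=> fg; congr tlift; apply: functional_extensionality => u; apply: functional_extensionality.
Qed.

Lemma is_linear_tensl v : is_linear (fun u => tens T u v).
Proof. exact: is_bilinear_l (tens_bilinear T). Qed.

Lemma is_linear_tensr u : is_linear (tens T u).
Proof. exact: is_bilinear_r (tens_bilinear T). Qed.

Lemma linear_tens_ext W (g1 g2 : tspace T -> W) : is_linear g1 -> is_linear g2 ->
  (forall u v, g1 (tens T u v) = g2 (tens T u v)) -> forall x, g1 x = g2 x.
Proof.
move=> l1 l2 g12 x.
have bg1 : is_bilinear (fun u v => g1 (tens T u v)).
  by split=> [v|u]; apply: is_linear_comp l1 _; [apply: is_linear_tensl | apply: is_linear_tensr].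
by rewrite -(tlift_unique bg1 l1) // (tlift_unique bg1 l2).
Qed.

Lemma is_linear_tlift_param W X (F : X -> U -> V -> W) p :
  (forall x, is_bilinear (F x)) -> (forall u v, is_linear (fun x => F x u v)) ->
  is_linear (fun x => tlift T (F x) p).
Proof.
move=> bF lF a x y.
have lg : is_linear (fun p => a *: tlift T (F x) p + tlift T (F y) p).
  by apply: is_linear_comb; apply: is_linear_tlift.
by rewrite (tlift_unique (bF _) lg) // => u v; rewrite !tliftE // lF.
Qed.

Lemma linear_tlift W W' (phi : W -> W') (f : U -> V -> W) p :
  is_linear phi -> is_bilinear f ->
  phi (tlift T f p) = tlift T (fun u v => phi (f u v)) p.
Proof.
move=> lphi bf.
have bg : is_bilinear (fun u v => phi (f u v)).
  by split=> [v|u]; apply: is_linear_comp lphi _; [apply: is_bilinear_l | apply: is_bilinear_r].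
symmetry; apply: (tlift_unique (g := fun p => phi (tlift T f p)) bg) => [|u v].
  exact: is_linear_comp lphi (is_linear_tlift bf).
by rewrite tliftE.
Qed.

End Tensor.

#[export] Hint Resolve is_linear_tensl is_linear_tensr : linear.

(* Composing with the identity would reproduce the goal. *)
Ltac not_identity G := lazymatch G with (fun x => x) => fail | _ => idtac end.

Ltac linear_step :=
  match goal with
  | |- is_linear (fun x => x) => apply: is_linear_id
  | |- is_linear (fun x => ?f x) => change (is_linear f)
  | |- is_linear (tlift _ _) => apply: is_linear_tlift
  | |- is_linear (fun x => tlift ?T (@?F x) ?p) => apply: (is_linear_tlift_param (T := T) (F := F) p)
  | |- _ => solve [eauto with linear]
  | |- is_linear (fun x => @GRing.scale _ _ (@?a x) ?c) => apply: (is_linear_scalel (a := a) c)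
  | |- is_linear (fun x => ?f (@?G x)) =>
      not_identity G; apply: (is_linear_comp (f := f) (g := G))
  | |- is_linear (fun x => ?f (@?G x) ?c) =>
      not_identity G; apply: (is_linear_comp (f := fun v => f v c) (g := G))
  | |- is_linear (fun x => ?f (@?G x) ?c ?d) =>
      not_identity G; apply: (is_linear_comp (f := fun v => f v c d) (g := G))
  end.

Ltac linear :=
  repeat match goal with
  | |- _ => assumption
  | |- _ => progress cbv beta
  | |- is_bilinear _ => split
  | |- forall _, _ => intro
  | |- is_linear _ => linear_step
  end.

Section Exchange.
Variables (k : fieldType) (U1 V1 U2 V2 W : lmodType k).
Variables (T1 : tensor U1 V1) (T2 : tensor U2 V2).

Lemma exchange_tlift (F : U1 -> V1 -> U2 -> V2 -> W) x y :
  (forall b c d, is_linear (fun a => F a b c d)) ->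
  (forall a c d, is_linear (fun b => F a b c d)) ->
  (forall a b d, is_linear (fun c => F a b c d)) ->
  (forall a b c, is_linear (fun d => F a b c d)) ->
  tlift T1 (fun a b => tlift T2 (F a b) y) x =
  tlift T2 (fun c d => tlift T1 (fun a b => F a b c d) x) y.
Proof.
move=> l1 l2 l3 l4; move: y; apply: linear_tens_ext; [linear | linear | move=> c d /=].
rewrite tliftE; last by linear.
by apply: eq_tlift => a b; rewrite tliftE.
Qed.

End Exchange.

Section Hopf.
Variables (k : fieldType) (H : algType k) (HH : tensor H H)
  (HHH : tensor (tspace HH) H) (Delta : H -> tspace HH) (eps : H -> k) (S : H -> H).
Hypothesis hopf : is_hopf HHH Delta eps S.
Implicit Types W : lmodType k.

Local Notation D F x := (tlift HH F (Delta x)).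

Lemma is_linear_Delta : is_linear Delta.
Proof. by case: hopf. Qed.

Lemma is_linear_eps : is_linear (eps : H -> k^o).
Proof. by case: hopf => _ []. Qed.

Lemma is_linear_S : is_linear S.
Proof. by case: hopf => _ [_ []]. Qed.

#[local] Hint Resolve is_linear_Delta is_linear_eps is_linear_S : linear.

Lemma tlift_Delta1 W (F : H -> H -> W) : is_bilinear F -> D F 1 = F 1 1.
Proof. by case: hopf => _ [_ [_ [[-> _] _]]] bF; rewrite tliftE. Qed.

Lemma tlift_DeltaM W (F : H -> H -> W) x y : is_bilinear F ->
  D F (x * y) = D (fun a b => D (fun c d => F (a * c) (b * d)) y) x.
Proof.
case: hopf => _ [_ [_ [[_ ->] _]]] bF; rewrite linear_tlift; [|linear|linear].
apply: eq_tlift => a b; rewrite linear_tlift; [|linear|linear].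
by apply: eq_tlift => c d; rewrite tliftE.
Qed.

Lemma tlift_coassoc W (F : H -> H -> H -> W) h :
  (forall b c, is_linear (fun a => F a b c)) ->
  (forall a c, is_linear (fun b => F a b c)) ->
  (forall a b, is_linear (fun c => F a b c)) ->
  D (fun a b => D (fun c d => F c d b) a) h = D (fun a b => D (fun c d => F a c d) b) h.
Proof.
case: hopf => _ [_ [_ [_ [_ [coassoc _]]]]] l1 l2 l3.
have := congr1 (tlift HHH (fun p c => tlift HH (fun a b => F a b c) p)) (coassoc h).
rewrite !linear_tlift; [|linear..] => coassocF.
transitivity (D (fun a b => tlift HHH (fun p c => tlift HH (fun a b => F a b c) p)
                                      (tens HHH (Delta a) b)) h).
  by apply: eq_tlift => a b; rewrite tliftE; linear.
rewrite coassocF; apply: eq_tlift => a b; rewrite linear_tlift; [|linear..].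
by apply: eq_tlift => c d; rewrite tliftE; [rewrite tliftE | ]; linear.
Qed.

(* Both sides are the Sweedler sum of K g_(1) g_(2) g_(3) g_(4). *)
Lemma tlift_coassoc4 W (K : H -> H -> H -> H -> W) g :
  (forall b c d, is_linear (fun a => K a b c d)) ->
  (forall a c d, is_linear (fun b => K a b c d)) ->
  (forall a b d, is_linear (fun c => K a b c d)) ->
  (forall a b c, is_linear (fun d => K a b c d)) ->
  D (fun a b => D (fun e f => D (fun c d => K e f c d) b) a) g =
  D (fun a b => D (fun c d => D (fun e f => K a e f d) c) b) g.
Proof.
move=> l1 l2 l3 l4.
rewrite (tlift_coassoc (F := fun e f b => D (fun c d => K e f c d) b)); [|linear..].
by apply: eq_tlift => a b; rewrite (tlift_coassoc (F := K a)).
Qed.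

Lemma tlift_counitl W (phi : H -> W) h : is_linear phi ->
  D (fun a b => eps a *: phi b) h = phi h.
Proof.
case: hopf => _ [_ [_ [_ [_ [_ [counit _]]]]]] lphi.
rewrite -{2}(proj1 (counit h)) linear_tlift; [|linear..].
by apply: eq_tlift => a b; rewrite is_linearZ.
Qed.

Lemma tlift_counitr W (phi : H -> W) h : is_linear phi ->
  D (fun a b => eps b *: phi a) h = phi h.
Proof.
case: hopf => _ [_ [_ [_ [_ [_ [counit _]]]]]] lphi.
rewrite -{2}(proj2 (counit h)) linear_tlift; [|linear..].
by apply: eq_tlift => a b; rewrite is_linearZ.
Qed.

Lemma tlift_antipodel W (phi : H -> W) h : is_linear phi ->
  D (fun a b => phi (S a * b)) h = eps h *: phi 1.
Proof.
case: hopf => _ [_ [_ [_ [_ [_ [_ [antipode _]]]]]]] lphi.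
by rewrite -is_linearZ // -(proj1 (antipode h)) linear_tlift; linear.
Qed.

Lemma tlift_antipoder W (phi : H -> W) h : is_linear phi ->
  D (fun a b => phi (a * S b)) h = eps h *: phi 1.
Proof.
case: hopf => _ [_ [_ [_ [_ [_ [_ [antipode _]]]]]]] lphi.
by rewrite -is_linearZ // -(proj2 (antipode h)) linear_tlift; linear.
Qed.

Local Notation tmul p q :=
  (tlift HH (fun a b => tlift HH (fun c d => tens HH (a * c) (b * d)) q) p).

Lemma tmul_tensl a b q :
  tmul (tens HH a b) q = tlift HH (fun c d => tens HH (a * c) (b * d)) q.
Proof. by rewrite tliftE; linear. Qed.

Lemma tmul_tens a b c d : tmul (tens HH a b) (tens HH c d) = tens HH (a * c) (b * d).
Proof. by rewrite tmul_tensl tliftE; linear. Qed.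

Lemma tmulA p q r : tmul (tmul p q) r = tmul p (tmul q r).
Proof.
move: p; apply: linear_tens_ext; [linear | linear | move=> a b /=].
rewrite !tmul_tensl; move: q; apply: linear_tens_ext; [linear | linear | move=> c d /=].
rewrite tliftE ?tmul_tensl; last linear.
move: r; apply: linear_tens_ext; [linear | linear | move=> e f /=].
by rewrite !tliftE ?mulrA; linear.
Qed.

Lemma tmul1l q : tmul (tens HH 1 1) q = q.
Proof.
rewrite tmul_tensl; move: q; apply: linear_tens_ext; [linear | linear | move=> c d /=].
by rewrite tliftE ?mul1r; linear.
Qed.

Lemma tmul1r p : tmul p (tens HH 1 1) = p.
Proof.
by move: p; apply: linear_tens_ext; [linear | linear | move=> a b /=]; rewrite tmul_tens !mulr1.
Qed.

Local Notation conv f g x := (D (fun a b => tmul (f a) (g b)) x).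

Local Notation cunit x := (eps x *: tens HH 1 1).

Lemma convA (f g e : H -> tspace HH) x : is_linear f -> is_linear g -> is_linear e ->
  conv f (fun y => conv g e y) x = conv (fun y => conv f g y) e x.
Proof.
move=> lf lg le.
transitivity (D (fun a b => D (fun c d => tmul (f a) (tmul (g c) (e d))) b) x).
  by apply: eq_tlift => a b; rewrite (linear_tlift (phi := fun q => tmul (f a) q)); linear.
transitivity (D (fun a b => D (fun c d => tmul (tmul (f c) (g d)) (e b)) a) x).
  rewrite (tlift_coassoc (F := fun c d b => tmul (tmul (f c) (g d)) (e b))); [|linear..].
  by apply: eq_tlift => a b; apply: eq_tlift => c d; rewrite tmulA.
by apply: eq_tlift => a b; rewrite (linear_tlift (phi := fun p => tmul p (e b))); linear.
Qed.

Lemma conv1r (f : H -> tspace HH) x : is_linear f -> conv f (fun y => cunit y) x = f x.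
Proof.
move=> lf; rewrite -(tlift_counitr x lf); apply: eq_tlift => a b.
by rewrite (is_linearZ _ _ (f := fun q => tmul (f a) q)) ?tmul1r; linear.
Qed.

Lemma conv1l (f : H -> tspace HH) x : is_linear f -> conv (fun y => cunit y) f x = f x.
Proof.
move=> lf; rewrite -(tlift_counitl x lf); apply: eq_tlift => a b.
by rewrite (is_linearZ _ _ (f := fun p => tmul p (f b))) ?tmul1l; linear.
Qed.

Lemma conv_inv_uniq (f fl fr : H -> tspace HH) x :
  is_linear f -> is_linear fl -> is_linear fr ->
  (forall y, conv fl f y = cunit y) -> (forall y, conv f fr y = cunit y) -> fl x = fr x.
Proof.
move=> lf lfl lfr flf ffr.
rewrite -conv1r // -(conv1l x lfr).
transitivity (conv fl (fun y => conv f fr y) x); first by apply: eq_tlift => a b; rewrite ffr.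
by rewrite convA //; apply: eq_tlift => a b; rewrite flf.
Qed.

Lemma conv_DeltaS_Delta x : conv (fun a => Delta (S a)) Delta x = cunit x.
Proof.
case: hopf => _ [_ [_ [[Delta1 DeltaM] _]]].
transitivity (D (fun a b => Delta (S a * b)) x); first by apply: eq_tlift => a b; rewrite DeltaM.
by rewrite (tlift_antipodel x is_linear_Delta) Delta1.
Qed.

Lemma conv_Delta_flipS x :
  conv Delta (fun b => D (fun c d => tens HH (S d) (S c)) b) x = cunit x.
Proof.
transitivity (D (fun a b => D (fun c d => D (fun e f => tens HH (c * S f) (d * S e)) b) a) x).
  apply: eq_tlift => a b; apply: eq_tlift => c d.
  rewrite (linear_tlift (phi := fun q => tlift HH (fun c' d' => tens HH (c * c') (d * d')) q)); [|linear..].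
  by apply: eq_tlift => e f; rewrite tliftE; linear.
rewrite (tlift_coassoc4 (K := fun c d e f => tens HH (c * S f) (d * S e))); [|linear..].
transitivity (D (fun a b => D (fun c d => eps c *: tens HH (a * S d) 1) b) x).
  apply: eq_tlift => a b; apply: eq_tlift => c d.
  by rewrite (tlift_antipoder c (phi := fun z => tens HH (a * S d) z)); linear.
transitivity (D (fun a b => tens HH (a * S b) 1) x).
  by apply: eq_tlift => a b; rewrite (tlift_counitl b (phi := fun z => tens HH (a * S z) 1)); linear.
by rewrite (tlift_antipoder x (phi := fun z => tens HH z 1)); linear.
Qed.

(* Δ ∘ S and (S ⊗ S) ∘ flip ∘ Δ are a left and a right convolution inverse of Δ. *)
Lemma Delta_antipode x : Delta (S x) = D (fun c d => tens HH (S d) (S c)) x.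
Proof.
apply: (conv_inv_uniq (f := Delta) (fl := fun a => Delta (S a))
                      (fr := fun b => D (fun c d => tens HH (S d) (S c)) b)); linear.
  exact: conv_DeltaS_Delta.
exact: conv_Delta_flipS.
Qed.

Lemma tlift_DeltaS W (F : H -> H -> W) x : is_bilinear F ->
  D F (S x) = D (fun a b => F (S b) (S a)) x.
Proof.
move=> bF; rewrite Delta_antipode linear_tlift; [|linear..].
by apply: eq_tlift => a b; rewrite tliftE.
Qed.

Local Notation sweedler3 A Phi x y z := (D (fun z1 z2 => D (fun y1 y2 => D (fun x1 x2 =>
  Phi (A x1 y1 z1) (x2 * (y2 * z2))) x) y) z).

Section Sweedler3.
Variables (U W : lmodType k) (A : H -> H -> H -> U) (Phi : U -> H -> W).
Hypotheses (lA1 : forall b c, is_linear (fun a => A a b c))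
  (lA2 : forall a c, is_linear (fun b => A a b c))
  (lA3 : forall a b, is_linear (fun c => A a b c))
  (lPhil : forall w, is_linear (fun u => Phi u w))
  (lPhir : forall u, is_linear (Phi u)).

Lemma sweedler3_fix_id_S h g : D (fun a b => sweedler3 A Phi h a (S b)) g =
  D (fun x1 x2 => Phi (D (fun a b => A x1 a (S b)) g) x2) h.
Proof.
transitivity (D (fun a b => D (fun c d => D (fun e f =>
    D (fun x1 x2 => Phi (A x1 e (S d)) (x2 * (f * S c))) h) a) b) g).
  by apply: eq_tlift => a b; rewrite tlift_DeltaS; linear.
transitivity (D (fun a b => D (fun e f => D (fun c d =>
    D (fun x1 x2 => Phi (A x1 e (S d)) (x2 * (f * S c))) h) b) a) g).
  by apply: eq_tlift => a b; rewrite exchange_tlift; linear.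
rewrite (tlift_coassoc4 (K := fun e f c d =>
  D (fun x1 x2 => Phi (A x1 e (S d)) (x2 * (f * S c))) h)); [|linear..].
transitivity (D (fun a b => D (fun x1 x2 => Phi (A x1 a (S b)) x2) h) g).
  apply: eq_tlift => a b.
  transitivity (D (fun c d => eps c *: D (fun x1 x2 => Phi (A x1 a (S d)) x2) h) b).
    apply: eq_tlift => c d; rewrite (tlift_antipoder c
      (phi := fun z => D (fun x1 x2 => Phi (A x1 a (S d)) (x2 * z)) h)); last linear.
    by congr (_ *: _); apply: eq_tlift => x1 x2; rewrite mulr1.
  by rewrite (tlift_counitl b (phi := fun z => D (fun x1 x2 => Phi (A x1 a (S z)) x2) h)); linear.
rewrite exchange_tlift; [|linear..].
by apply: eq_tlift => x1 x2; rewrite (linear_tlift (phi := fun u => Phi u x2)); linear.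
Qed.

Lemma sweedler3_id_S_fix h g : D (fun a b => sweedler3 A Phi a (S b) g) h =
  D (fun z1 z2 => Phi (D (fun a b => A a (S b) z1) h) z2) g.
Proof.
transitivity (D (fun a b => D (fun z1 z2 => D (fun c d => D (fun e f =>
    Phi (A e (S d) z1) (f * (S c * z2))) a) b) g) h).
  by apply: eq_tlift => a b; apply: eq_tlift => z1 z2; rewrite tlift_DeltaS; linear.
rewrite exchange_tlift; [|linear..]; apply: eq_tlift => z1 z2.
transitivity (D (fun a b => D (fun e f => D (fun c d =>
    Phi (A e (S d) z1) (f * S c * z2)) b) a) h).
  apply: eq_tlift => a b; rewrite exchange_tlift; [|linear..].
  by apply: eq_tlift => e f; apply: eq_tlift => c d; rewrite mulrA.
rewrite (tlift_coassoc4 (K := fun e f c d => Phi (A e (S d) z1) (f * S c * z2))); [|linear..].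
rewrite (linear_tlift (phi := fun u => Phi u z2)); [|linear..].
apply: eq_tlift => a b.
transitivity (D (fun c d => eps c *: Phi (A a (S d) z1) z2) b).
  apply: eq_tlift => c d.
  by rewrite (tlift_antipoder c (phi := fun z => Phi (A a (S d) z1) (z * z2))) ?mul1r; linear.
by rewrite (tlift_counitl b (phi := fun z => Phi (A a (S z) z1) z2)); linear.
Qed.

Lemma sweedler3_fix_S_id h g : D (fun a b => sweedler3 A Phi h (S a) b) g =
  D (fun a b => D (fun c d => D (fun x1 x2 =>
    Phi (D (fun e f => A x1 (S e) f) c) (x2 * (S a * d))) h) b) g.
Proof.
transitivity (D (fun a b => D (fun c d => D (fun e f =>
    D (fun x1 x2 => Phi (A x1 (S f) c) (x2 * (S e * d))) h) a) b) g).
  by apply: eq_tlift => a b; apply: eq_tlift => c d; rewrite tlift_DeltaS; linear.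
transitivity (D (fun a b => D (fun e f => D (fun c d =>
    D (fun x1 x2 => Phi (A x1 (S f) c) (x2 * (S e * d))) h) b) a) g).
  by apply: eq_tlift => a b; rewrite exchange_tlift; linear.
rewrite (tlift_coassoc4 (K := fun e f c d =>
  D (fun x1 x2 => Phi (A x1 (S f) c) (x2 * (S e * d))) h)); [|linear..].
apply: eq_tlift => a b; apply: eq_tlift => c d.
rewrite exchange_tlift; [|linear..]; apply: eq_tlift => x1 x2.
by rewrite (linear_tlift (phi := fun u => Phi u (x2 * (S a * d)))); linear.
Qed.

Lemma sweedler3_S_id_fix h g : D (fun a b => sweedler3 A Phi (S a) b g) h =
  D (fun z1 z2 => D (fun a b => D (fun c d =>
    Phi (D (fun e f => A (S e) f z1) c) (S a * (d * z2))) b) h) g.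
Proof.
transitivity (D (fun a b => D (fun z1 z2 => D (fun c d => D (fun e f =>
    Phi (A (S f) c z1) (S e * (d * z2))) a) b) g) h).
  apply: eq_tlift => a b; apply: eq_tlift => z1 z2; apply: eq_tlift => c d.
  by rewrite tlift_DeltaS; linear.
rewrite exchange_tlift; [|linear..]; apply: eq_tlift => z1 z2.
transitivity (D (fun a b => D (fun e f => D (fun c d =>
    Phi (A (S f) c z1) (S e * (d * z2))) b) a) h).
  by apply: eq_tlift => a b; rewrite exchange_tlift; linear.
rewrite (tlift_coassoc4 (K := fun e f c d => Phi (A (S f) c z1) (S e * (d * z2)))); [|linear..].
apply: eq_tlift => a b; apply: eq_tlift => c d.
by rewrite (linear_tlift (phi := fun u => Phi u (S a * (d * z2)))); linear.
Qed.

End Sweedler3.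

Section TensorModule.
Variables (M N : lmodType k) (pi : H -> M -> M) (rho : H -> N -> N) (MN : tensor M N).
Hypotheses (pm : is_partial_module Delta S pi) (nm : is_module rho).

Lemma is_linear_pil m : is_linear (fun h => pi h m).
Proof. by case: pm => [[]]. Qed.

Lemma is_linear_pir h : is_linear (pi h).
Proof. by case: pm => [[]]. Qed.

Lemma is_linear_rhol n : is_linear (fun h => rho h n).
Proof. by case: nm => [[]]. Qed.

Lemma is_linear_rhor h : is_linear (rho h).
Proof. by case: nm => [[]]. Qed.

#[local] Hint Resolve is_linear_pil is_linear_pir is_linear_rhol is_linear_rhor : linear.

Local Notation tensN n := (fun u w => tens MN u (rho w n)).
Local Notation tact h x :=
  (tlift MN (fun m n => D (fun a b => tens MN (pi a m) (rho b n)) h) x).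

Lemma tact_tens h m n : tact h (tens MN m n) = D (fun a b => tens MN (pi a m) (rho b n)) h.
Proof. by rewrite tliftE; linear. Qed.

Lemma tact3_tens x y z m n : tact x (tact y (tact z (tens MN m n))) =
  sweedler3 (fun a b c => pi a (pi b (pi c m))) (tensN n) x y z.
Proof.
case: nm => _ _ rhoM.
rewrite tact_tens (linear_tlift (phi := fun t => tact y t)); [|linear..].
rewrite (linear_tlift (phi := fun t => tact x t)); [|linear..].
apply: eq_tlift => c d; rewrite tact_tens (linear_tlift (phi := fun t => tact x t)); [|linear..].
apply: eq_tlift => a b; rewrite tact_tens.
by apply: eq_tlift => e f; rewrite !rhoM.
Qed.

Lemma tact_mull_tens x y z m n : tact (x * y) (tact z (tens MN m n)) =
  sweedler3 (fun a b c => pi (a * b) (pi c m)) (tensN n) x y z.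
Proof.
case: nm => _ _ rhoM.
rewrite tact_tens (linear_tlift (phi := fun t => tact (x * y) t)); [|linear..].
apply: eq_tlift => c d; rewrite tact_tens tlift_DeltaM; last linear.
rewrite exchange_tlift; [|linear..].
by apply: eq_tlift => a b; apply: eq_tlift => e f; rewrite !rhoM.
Qed.

Lemma tact_mulr_tens x y z m n : tact x (tact (y * z) (tens MN m n)) =
  sweedler3 (fun a b c => pi a (pi (b * c) m)) (tensN n) x y z.
Proof.
case: nm => _ _ rhoM.
rewrite tact_tens tlift_DeltaM; last linear.
rewrite (linear_tlift (phi := fun t => tact x t)); [|linear..].
transitivity (D (fun a b => D (fun c d => tact x (tens MN (pi (a * c) m) (rho (b * d) n))) z) y).
  by apply: eq_tlift => a b; rewrite (linear_tlift (phi := fun t => tact x t)); linear.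
rewrite exchange_tlift; [|linear..].
apply: eq_tlift => c d; apply: eq_tlift => a b; rewrite tact_tens.
by apply: eq_tlift => e f; rewrite !rhoM.
Qed.

Lemma tact_partial1 h g x :
  D (fun a b => tact h (tact a (tact (S b) x))) g = D (fun a b => tact (h * a) (tact (S b) x)) g.
Proof.
case: pm => _ [_ [ax1 _]].
move: x; apply: linear_tens_ext; [linear | linear | move=> m n /=].
rewrite (eq_tlift _ (fun a b => tact3_tens h a (S b) m n)).
rewrite (eq_tlift _ (fun a b => tact_mull_tens h a (S b) m n)).
rewrite !(sweedler3_fix_id_S (Phi := tensN n)); [|linear..].
by apply: eq_tlift => x1 x2; rewrite ax1.
Qed.

Lemma tact_partial2 h g x :
  D (fun a b => tact a (tact (S b) (tact g x))) h = D (fun a b => tact a (tact (S b * g) x)) h.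
Proof.
case: pm => _ [_ [_ [ax2 _]]].
move: x; apply: linear_tens_ext; [linear | linear | move=> m n /=].
rewrite (eq_tlift _ (fun a b => tact3_tens a (S b) g m n)).
rewrite (eq_tlift _ (fun a b => tact_mulr_tens a (S b) g m n)).
rewrite !(sweedler3_id_S_fix (Phi := tensN n)); [|linear..].
by apply: eq_tlift => z1 z2; rewrite ax2.
Qed.

Lemma tact_partial3 h g x :
  D (fun a b => tact h (tact (S a) (tact b x))) g = D (fun a b => tact (h * S a) (tact b x)) g.
Proof.
case: pm => _ [_ [_ [_ [ax3 _]]]].
move: x; apply: linear_tens_ext; [linear | linear | move=> m n /=].
rewrite (eq_tlift _ (fun a b => tact3_tens h (S a) b m n)).
rewrite (eq_tlift _ (fun a b => tact_mull_tens h (S a) b m n)).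
rewrite !(sweedler3_fix_S_id (Phi := tensN n)); [|linear..].
by apply: eq_tlift => a b; apply: eq_tlift => c d; apply: eq_tlift => x1 x2; rewrite ax3.
Qed.

Lemma tact_partial4 h g x :
  D (fun a b => tact (S a) (tact b (tact g x))) h = D (fun a b => tact (S a) (tact (b * g) x)) h.
Proof.
case: pm => _ [_ [_ [_ [_ ax4]]]].
move: x; apply: linear_tens_ext; [linear | linear | move=> m n /=].
rewrite (eq_tlift _ (fun a b => tact3_tens (S a) b g m n)).
rewrite (eq_tlift _ (fun a b => tact_mulr_tens (S a) b g m n)).
rewrite !(sweedler3_S_id_fix (Phi := tensN n)); [|linear..].
by apply: eq_tlift => z1 z2; apply: eq_tlift => a b; apply: eq_tlift => c d; rewrite ax4.
Qed.

Lemma tensor_partial_module : is_partial_module Delta S (fun h x => tact h x).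
Proof.
split; first by linear.
split.
  case: pm => _ [pi1 _]; case: nm => _ rho1 _.
  apply: linear_tens_ext; [linear | linear | move=> m n /=].
  by rewrite tact_tens tlift_Delta1 ?pi1 ?rho1; linear.
split; first exact: tact_partial1.
split; first exact: tact_partial2.
split; first exact: tact_partial3.
exact: tact_partial4.
Qed.

End TensorModule.

End Hopf.

Theorem mainTheorem16 (k : fieldType) (H : algType k) (HH : tensor H H)
  (HHH : tensor (tspace HH) H) (Delta : H -> tspace HH) (eps : H -> k)
  (S : H -> H) (M N : lmodType k) (pi : H -> M -> M) (rho : H -> N -> N)
  (MN : tensor M N) :
  is_hopf HHH Delta eps S ->
  is_partial_module Delta S pi ->
  is_module rho ->
  exists piMN : H -> tspace MN -> tspace MN,
    is_partial_module Delta S piMN /\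
    (forall (h : H) (m : M) (n : N),
       piMN h (tens MN m n) =
       tlift HH (fun a b => tens MN (pi a m) (rho b n)) (Delta h)).
Proof.
move=> hopf pm nm.
exists (fun h => tlift MN (fun m n => tlift HH (fun a b => tens MN (pi a m) (rho b n)) (Delta h))).
split; first exact (tensor_partial_module hopf MN pm nm).
by move=> h m n; rewrite (tact_tens _ pm nm).
Qed.
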